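(* Let $\lambda=(\lambda_1,\lambda_2,\lambda_3)\in\mathbb C^3$ and let $\pi$ be a representation of $\mathrm U_q(\mathfrak{gl}_3)$ on a space $W$ generated by a vector $v_0$ with $q^{\nu G_i}v_0=q^{\nu\lambda_i}v_0$ for all $\nu\in\mathbb C$, $i=1,2,3$, and $E_1v_0=E_2v_0=0$. Then $C^{(1)},C^{(2)},C^{(3)}$ act on $W$ as scalars and, as polynomials in a formal variable $\zeta$, $$\pi\bigl(1-C^{(1)}\zeta-C^{(2)}\zeta^2-C^{(3)}\zeta^3\bigr)=(1-q^{-2(\lambda_1+1)}\zeta)(1-q^{-2\lambda_2}\zeta)(1-q^{-2(\lambda_3-1)}\zeta).$$ Consequently, if $F_k$ ($k\ge1$) are defined by $\sum_{k\ge1}F_k\zeta^k/k=-\log(1-C^{(1)}\zeta-C^{(2)}\zeta^2-C^{(3)}\zeta^3)$ and $F(\zeta)=\sum_{k\ge1}\frac{F_k}{q^{2k}+1+q^{-2k}}\frac{\zeta^k}{k}$ (assuming $q^{2k}+1+q^{-2k}\ne0$ for all $k\ge1$), then $\pi(F_k)=q^{-2(\lambda_1+1)k}+q^{-2\lambda_2k}+q^{-2(\lambda_3-1)k}$ and $$\pi(F(\zeta))=f_3(q^{-2(\lambda_1+1)}\zeta)+f_3(q^{-2\lambda_2}\zeta)+f_3(q^{-2(\lambda_3-1)}\zeta),\qquad f_3(\zeta)=\sum_{k\ge1}\frac{1}{q^{2k}+1+q^{-2k}}\frac{\zeta^k}{k}.$$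
   Context: Setting: $\hbar\in\mathbb C$, $q=e^\hbar$, $q^2\neq1$, $\kappa_q=q-q^{-1}$, $[\nu]_q=(q^\nu-q^{-\nu})/\kappa_q$. Let $\mathfrak g=\mathbb CG_1\oplus\mathbb CG_2\oplus\mathbb CG_3$ and define linear forms $\alpha_1,\alpha_2$ on $\mathfrak g$ by $\alpha_1(G_1)=1,\alpha_1(G_2)=-1,\alpha_1(G_3)=0$, $\alpha_2(G_1)=0,\alpha_2(G_2)=1,\alpha_2(G_3)=-1$; put $H_1=G_1-G_2$, $H_2=G_2-G_3$. $\mathrm U_q(\mathfrak{gl}_3)$ is the unital associative $\mathbb C$-algebra generated by $E_1,E_2,F_1,F_2$ and symbols $q^X$, $X\in\mathfrak g$, with relations $q^0=1$, $q^{X_1}q^{X_2}=q^{X_1+X_2}$, $q^XE_iq^{-X}=q^{\alpha_i(X)}E_i$, $q^XF_iq^{-X}=q^{-\alpha_i(X)}F_i$, $[E_i,F_j]=\delta_{ij}(q^{H_i}-q^{-H_i})/\kappa_q$, and for $i\ne j$ the $q$-Serre relations $E_i^2E_j-[2]_qE_iE_jE_i+E_jE_i^2=0$, $F_i^2F_j-[2]_qF_iF_jF_i+F_jF_i^2=0$. For $\nu\in\mathbb C$ one writes $q^{X+\nu}=q^\nu q^X$. Further $E_3=E_1E_2-q^{-1}E_2E_1$, $F_3=F_2F_1-qF_1F_2$, and $C^{(1)}=q^{-2G_1-2}+q^{-2G_2}+q^{-2G_3+2}+\kappa_q^2F_1E_1q^{-G_1-G_2-1}+\kappa_q^2F_2E_2q^{-G_2-G_3+1}+\kappa_q^2F_3E_3q^{-G_1-G_3+1}-\kappa_q^3F_3E_1E_2q^{-G_1-G_3}$,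 $C^{(2)}=-q^{-2G_1-2G_2-2}-q^{-2G_1-2G_3}-q^{-2G_2-2G_3+2}-\kappa_q^2F_1E_1q^{-G_1-G_2-2G_3+1}-\kappa_q^2F_2E_2q^{-2G_1-G_2-G_3-1}-\kappa_q^2F_3E_3q^{-G_1-2G_2-G_3+1}-\kappa_q^3F_1F_2E_3q^{-G_1-2G_2-G_3+1}$, $C^{(3)}=q^{-2(G_1+G_2+G_3)}$. *)

From HB Require Import structures.
From mathcomp Require Import all_boot all_order all_algebra.
Set Implicit Arguments. Unset Strict Implicit. Unset Printing Implicit Defensive.
Import Order.TTheory GRing.Theory Num.Theory.
Local Open Scope ring_scope.

Section Uq.
Variables (K : numClosedFieldType) (ex : K -> K) (hbar : K).

(* q^nu := e^(hbar nu); ex plays the role of the complex exponential *)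
Definition qpow (nu : K) : K := ex (hbar * nu).
Definition qq : K := qpow 1.
Definition kappa : K := qq - qq^-1.
Definition qint (nu : K) : K := (qpow nu - qpow (- nu)) / kappa.

Variable W : lmodType K.

Definition lin (f : W -> W) := forall (a : K) (u v : W), f (a *: u + v) = a *: f u + f v.

(* A representation pi of U_q(gl_3) on W: images of the generators E1,E2,F1,F2
   and of q^X for X = x1 G1 + x2 G2 + x3 G3 (written Kq x1 x2 x3), subject to
   the defining relations. *)
Record rep := Rep {
  E1 : W -> W; E2 : W -> W; F1 : W -> W; F2 : W -> W;
  Kq : K -> K -> K -> W -> W;
  lin_E1 : lin E1; lin_E2 : lin E2; lin_F1 : lin F1; lin_F2 : lin F2;
  lin_Kq : forall x1 x2 x3, lin (Kq x1 x2 x3);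
  Kq0 : forall w, Kq 0 0 0 w = w;
  KqD : forall x1 x2 x3 y1 y2 y3 w,
      Kq x1 x2 x3 (Kq y1 y2 y3 w) = Kq (x1 + y1) (x2 + y2) (x3 + y3) w;
  KqE1 : forall x1 x2 x3 w,
      Kq x1 x2 x3 (E1 (Kq (- x1) (- x2) (- x3) w)) = qpow (x1 - x2) *: E1 w;
  KqE2 : forall x1 x2 x3 w,
      Kq x1 x2 x3 (E2 (Kq (- x1) (- x2) (- x3) w)) = qpow (x2 - x3) *: E2 w;
  KqF1 : forall x1 x2 x3 w,
      Kq x1 x2 x3 (F1 (Kq (- x1) (- x2) (- x3) w)) = qpow (- (x1 - x2)) *: F1 w;
  KqF2 : forall x1 x2 x3 w,
      Kq x1 x2 x3 (F2 (Kq (- x1) (- x2) (- x3) w)) = qpow (- (x2 - x3)) *: F2 w;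
  EF11 : forall w, E1 (F1 w) - F1 (E1 w) = kappa^-1 *: (Kq 1 (-1) 0 w - Kq (-1) 1 0 w);
  EF22 : forall w, E2 (F2 w) - F2 (E2 w) = kappa^-1 *: (Kq 0 1 (-1) w - Kq 0 (-1) 1 w);
  EF12 : forall w, E1 (F2 w) - F2 (E1 w) = 0;
  EF21 : forall w, E2 (F1 w) - F1 (E2 w) = 0;
  SerreE12 : forall w, E1 (E1 (E2 w)) - qint 2 *: E1 (E2 (E1 w)) + E2 (E1 (E1 w)) = 0;
  SerreE21 : forall w, E2 (E2 (E1 w)) - qint 2 *: E2 (E1 (E2 w)) + E1 (E2 (E2 w)) = 0;
  SerreF12 : forall w, F1 (F1 (F2 w)) - qint 2 *: F1 (F2 (F1 w)) + F2 (F1 (F1 w)) = 0;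
  SerreF21 : forall w, F2 (F2 (F1 w)) - qint 2 *: F2 (F1 (F2 w)) + F1 (F2 (F2 w)) = 0
}.

Variable r : rep.

Definition E3 (w : W) : W := E1 r (E2 r w) - qq^-1 *: E2 r (E1 r w).
Definition F3 (w : W) : W := F2 r (F1 r w) - qq *: F1 r (F2 r w).

(* pi(C^(1)), pi(C^(2)), pi(C^(3)); q^(X+nu) = q^nu q^X *)
Definition C1 (w : W) : W :=
  qpow (-2) *: Kq r (-2) 0 0 w + Kq r 0 (-2) 0 w + qpow 2 *: Kq r 0 0 (-2) w
  + kappa ^+ 2 *: F1 r (E1 r (qpow (-1) *: Kq r (-1) (-1) 0 w))
  + kappa ^+ 2 *: F2 r (E2 r (qpow 1 *: Kq r 0 (-1) (-1) w))
  + kappa ^+ 2 *: F3 (E3 (qpow 1 *: Kq r (-1) 0 (-1) w))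
  - kappa ^+ 3 *: F3 (E1 r (E2 r (Kq r (-1) 0 (-1) w))).

Definition C2 (w : W) : W :=
  - (qpow (-2) *: Kq r (-2) (-2) 0 w) - Kq r (-2) 0 (-2) w
  - qpow 2 *: Kq r 0 (-2) (-2) w
  - kappa ^+ 2 *: F1 r (E1 r (qpow 1 *: Kq r (-1) (-1) (-2) w))
  - kappa ^+ 2 *: F2 r (E2 r (qpow (-1) *: Kq r (-2) (-1) (-1) w))
  - kappa ^+ 2 *: F3 (E3 (qpow 1 *: Kq r (-1) (-2) (-1) w))
  - kappa ^+ 3 *: F1 r (F2 r (E3 (qpow 1 *: Kq r (-1) (-2) (-1) w))).

Definition C3 (w : W) : W := Kq r (-2) (-2) (-2) w.

Definition Cvec (i : 'I_3) : W -> W :=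
  if val i == 0%N then C1 else if val i == 1%N then C2 else C3.

Definition opprod (s : seq 'I_3) : W -> W := foldr (fun i f => Cvec i \o f) id s.

(* coefficient of zeta^k in x^m, x = C1 zeta + C2 zeta^2 + C3 zeta^3 *)
Definition powcoef (m k : nat) (w : W) : W :=
  \sum_(s : m.-tuple 'I_3 | sumn [seq (nat_of_ord i).+1 | i <- s] == k) opprod s w.

(* coefficient of zeta^k in -log(1 - x) = sum_(m>=1) x^m/m
   (terms with m > k vanish since x has no constant term) *)
Definition logcoef (k : nat) (w : W) : W :=
  \sum_(1 <= m < k.+1) (m%:R)^-1 *: powcoef m k w.

(* pi(F_k), where sum_k F_k zeta^k / k = -log(1 - x) *)
Definition Fk (k : nat) (w : W) : W := k%:R *: logcoef k w.

End Uq.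

(* W is generated by v0 as a U_q(gl_3)-module *)
Inductive gen (K : numClosedFieldType) (ex : K -> K) (hbar : K) (W : lmodType K)
    (r : rep ex hbar W) (v0 : W) : W -> Prop :=
| gen_v0 : gen r v0 v0
| gen_E1 u : gen r v0 u -> gen r v0 (E1 r u)
| gen_E2 u : gen r v0 u -> gen r v0 (E2 r u)
| gen_F1 u : gen r v0 u -> gen r v0 (F1 r u)
| gen_F2 u : gen r v0 u -> gen r v0 (F2 r u)
| gen_Kq x1 x2 x3 u : gen r v0 u -> gen r v0 (Kq r x1 x2 x3 u)
| gen_lin (a : K) u v : gen r v0 u -> gen r v0 v -> gen r v0 (a *: u + v).

From Pilot Require Import Defs.
From HB Require Import structures.
From mathcomp Require Import all_boot all_order all_algebra.
From mathcomp Require Import ring.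
Import Order.TTheory GRing.Theory Num.Theory.
Set Implicit Arguments. Unset Strict Implicit. Unset Printing Implicit Defensive.
Local Open Scope ring_scope.

(* The theorem splits into a representation-theoretic half and a
   combinatorial half.
   (1) The operators C1, C2, C3 are linear and commute with F1 and F2; this is
       a direct computation with the relations of U_q(gl_3) (q^X-conjugation,
       [E_i, F_j] and the q-Serre relations for F).  Since E_i and q^X preserve
       the span of the vectors F_{i_1} ... F_{i_m} v0, this span is all of W, so
       an operator commuting with F1, F2 and mapping v0 to c v0 is the scalar c.
       Evaluating on the highest-weight vector v0 shows that C1, C2, C3 are the
       scalars e1, -e2, e3, with e_i the elementary symmetric functions of
       a = q^(-2(l1+1)), b = q^(-2 l2), c = q^(-2(l3-1)); this is the
       factorisation of 1 - C1 z - C2 z^2 - C3 z^3.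
   (2) If x = s1 z + s2 z^2 + s3 z^3 with 1 - x = (1 - a z)(1 - b z)(1 - c z),
       then k [z^k] sum_m x^m / m = a^k + b^k + c^k (Newton's identities).  We
       expand x^m over tuples of exponents, differentiate
       (k [z^k] x^m / m = [z^(k-1)] x' x^(m-1)) and observe that the
       coefficients of g = x' (1 + x + ... + x^(N-1)) obey the recursion
       g = x' + x g in low degrees, which power sums satisfy as well. *)

(* Formal linear combinations of vectors: an identity between two such
   expressions holds as soon as every atom has the same coefficient on both
   sides. *)
Section LinearCombination.
Variables (R : nzRingType) (V : lmodType R).

Inductive lterm :=
  LAtom (n : nat) | LZero | LAdd (s t : lterm) | LOpp (t : lterm) | LScale (c : R) (t : lterm).

Fixpoint lterm_eval (env : seq V) (t : lterm) : V :=
  match t with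
  | LAtom n => nth 0 env n | LZero => 0
  | LAdd s t => lterm_eval env s + lterm_eval env t
  | LOpp t => - lterm_eval env t | LScale c t => c *: lterm_eval env t end.

Fixpoint lterm_coef (t : lterm) (i : nat) : R :=
  match t with
  | LAtom n => if eqn n i then 1 else 0 | LZero => 0
  | LAdd s t => lterm_coef s i + lterm_coef t i
  | LOpp t => - lterm_coef t i | LScale c t => c * lterm_coef t i end.

Fixpoint lterm_bound (t : lterm) : nat :=
  match t with
  | LAtom n => n.+1 | LZero => 0 | LAdd s t => maxn (lterm_bound s) (lterm_bound t)
  | LOpp t => lterm_bound t | LScale _ t => lterm_bound t end.

Lemma lterm_evalE env t N : (lterm_bound t <= N)%N ->
  lterm_eval env t = \sum_(i < N) lterm_coef t i *: nth 0 env i.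
Proof.
elim: t => [n||s IHs t IHt|t IHt|c t IHt] /=.
- move=> hn; rewrite (bigD1 (Ordinal hn)) //= big1 ?addr0.
    by rewrite (_ : eqn n n = true) ?scale1r //; apply/eqnP.
  move=> i hi; rewrite (_ : eqn n i = false) ?scale0r //.
  by apply/negbTE/eqnP => eni; move: hi; rewrite -val_eqE /= eni eqxx.
- by move=> _; rewrite big1 // => i _; rewrite scale0r.
- rewrite geq_max => /andP[hs ht].
  by rewrite IHs // IHt // -big_split /=; apply: eq_bigr => i _; rewrite scalerDl.
- by move=> h; rewrite IHt // -sumrN; apply: eq_bigr => i _; rewrite scaleNr.
- by move=> h; rewrite IHt // scaler_sumr; apply: eq_bigr => i _; rewrite scalerA.
Qed.

Lemma lterm_eval_eq env s t :
  (forall i, lterm_coef s i = lterm_coef t i) -> lterm_eval env s = lterm_eval env t.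
Proof.
move=> h; set N := maxn (lterm_bound s) (lterm_bound t).
by rewrite (@lterm_evalE env s N) ?leq_maxl // (@lterm_evalE env t N) ?leq_maxr //;
  apply: eq_bigr => i _; rewrite h.
Qed.
End LinearCombination.

(* Reification of a goal  L = R  between linear combinations: the atoms are
   the maximal subterms that are not built from +, -, *: and 0 (compared up to
   unification); the resulting coefficient identities, one per atom, are
   handed to the scalar tactic tac. *)
Ltac lc_unifiable x y := match goal with
  | _ => let _ := match goal with _ => unify x y end in constr:(true)
  | _ => constr:(false) end.
Ltac lc_mem x l := lazymatch l with
  | nil => constr:(false)
  | cons ?y ?l' => let b := lc_unifiable x y in
      lazymatch b with true => constr:(true) | false => lc_mem x l' end end.
Ltac lc_index x l := lazymatch l with
  | cons ?y ?l' => let b := lc_unifiable x y in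
      lazymatch b with true => constr:(0%nat)
      | false => let n := lc_index x l' in constr:(S n) end end.
Ltac lc_atoms t l := lazymatch t with
  | @GRing.add _ ?a ?b => let l1 := lc_atoms a l in lc_atoms b l1
  | @GRing.opp _ ?a => lc_atoms a l
  | @GRing.scale _ _ _ ?a => lc_atoms a l
  | @GRing.zero _ => l
  | _ => let m := lc_mem t l in
      lazymatch m with true => l | false => constr:(cons t l) end end.
Ltac lc_reify R t l := lazymatch t with
  | @GRing.add _ ?a ?b =>
      let x := lc_reify R a l in let y := lc_reify R b l in constr:(@LAdd R x y)
  | @GRing.opp _ ?a => let x := lc_reify R a l in constr:(@LOpp R x)
  | @GRing.scale _ _ ?c ?a => let x := lc_reify R a l in constr:(@LScale R c x)
  | @GRing.zero _ => constr:(@LZero R)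
  | _ => let n := lc_index t l in constr:(@LAtom R n) end.
Ltac lc_cases i l tac := lazymatch l with
  | nil => lazy beta iota delta [lterm_coef eqn]; tac
  | cons _ ?l' => destruct i as [|i];
      [lazy beta iota delta [lterm_coef eqn]; tac | lc_cases i l' tac] end.

Ltac lincomb R V tac :=
  lazymatch goal with |- ?L = ?R' =>
    let l := lc_atoms L (@nil V) in let l := lc_atoms R' l in
    let s := lc_reify R L l in let t := lc_reify R R' l in
    change (@lterm_eval R V l s = @lterm_eval R V l t); apply: lterm_eval_eq;
    let i := fresh "i" in intro i; lc_cases i l tac
  end.

(* Expansion of x^m over tuples of exponents, for x = s1 z + s2 z^2 + s3 z^3:
   the coefficient of z^k is the sum over tuples (i_1, ..., i_m) of weight
   (i_1 + 1) + ... + (i_m + 1) = k of the products s_(i_1) ... s_(i_m). *)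
Lemma big_tupleS (V : nmodType) (T : finType) m (F : m.+1.-tuple T -> V) :
  \sum_t F t = \sum_(i : T) \sum_(t : m.-tuple T) F (cons_tuple i t).
Proof.
rewrite pair_big /= (reindex (fun p : T * m.-tuple T => cons_tuple p.1 p.2)) //.
exists (fun t => (thead t, [tuple of behead t])) => [[i t] _|t _] /=.
  by congr pair; apply: val_inj.
by rewrite [RHS]tuple_eta; apply: val_inj.
Qed.

Section TupleExpansion.
Variables (R : comNzRingType) (s1 s2 s3 : R).

Definition coef3 (i : 'I_3) : R := if val i == 0%N then s1 else if val i == 1%N then s2 else s3.
Definition weight (s : seq 'I_3) : nat := sumn [seq (nat_of_ord i).+1 | i <- s].
Definition tuple_coef (m k : nat) : R :=
  \sum_(s : m.-tuple 'I_3 | weight s == k) \prod_(i <- s) coef3 i.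
Definition xpoly : {poly R} := s1 *: 'X^1 + s2 *: 'X^2 + s3 *: 'X^3.

Lemma coef_xpolyM (p : {poly R}) k : (xpoly * p)`_k =
  s1 * (if (k < 1)%N then 0 else p`_(k - 1)) + s2 * (if (k < 2)%N then 0 else p`_(k - 2))
  + s3 * (if (k < 3)%N then 0 else p`_(k - 3)).
Proof. by rewrite /xpoly !mulrDl -!scalerAl !coefD !coefZ !coefXnM. Qed.

Lemma tuple_coefE m k : tuple_coef m k = (xpoly ^+ m)`_k.
Proof.
elim: m k => [|m IH] k.
  rewrite /tuple_coef expr0 coef1; case: k => [|k].
    by rewrite (big_pred1 [tuple]) ?big_nil // => t; rewrite [t]tuple0 /= eqxx.
  by rewrite big_pred0 // => t; rewrite [t]tuple0.
have first_factor (i : 'I_3) : \sum_(t : m.-tuple 'I_3)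
    (if weight (cons_tuple i t) == k then \prod_(j <- cons_tuple i t) coef3 j else 0)
  = coef3 i * (if (k < i.+1)%N then 0 else tuple_coef m (k - i.+1)%N).
  rewrite /tuple_coef; case: ltnP => hk.
    rewrite mulr0 big1 // => t _; rewrite /weight /= ifF //; apply/negbTE.
    by rewrite neq_ltn; apply/orP; right; apply: leq_trans hk _; rewrite leq_addr.
  rewrite mulr_sumr [RHS]big_mkcond /=; apply: eq_bigr => t _.
  rewrite /weight /= big_cons.
  have -> : (sumn [seq (nat_of_ord j).+1 | j <- t] == (k - i.+1)%N) =
      ((i.+1 + sumn [seq (nat_of_ord j).+1 | j <- t])%N == k).
    by rewrite -(eqn_add2l i.+1) subnKC.
  by case: ifP.
rewrite /tuple_coef big_mkcond /= big_tupleS exprS coef_xpolyM.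
by rewrite !big_ord_recl big_ord0 addr0 !first_factor !IH /coef3 /= addrA.
Qed.

(* x is divisible by z, so x^N has no coefficients below degree N *)
Lemma coef_mul_xpolyX (p : {poly R}) N j : (j < N)%N -> (p * xpoly ^+ N)`_j = 0.
Proof.
move=> hj.
have -> : xpoly = 'X * (s1%:P + s2 *: 'X + s3 *: 'X^2).
  rewrite /xpoly !mulrDr -!scalerAr (mulrC 'X) mul_polyC -exprS -expr2.
  by rewrite expr1.
by rewrite exprMn mulrCA coefXnM hj.
Qed.

Lemma coef_deriv_xpoly j : (xpoly^`())`_j =
  s1 * (j == 0)%:R + s2 * (j == 1)%:R *+ 2 + s3 * (j == 2)%:R *+ 3.
Proof.
rewrite /xpoly !derivD !derivZ !derivXn !coefD !coefZ !coefMn !coefXn /=.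
by ring.
Qed.

Definition geom_deriv (N : nat) : {poly R} := xpoly^`() * \sum_(j < N) xpoly ^+ j.

Lemma coef_geom_deriv_rec N j : (j < N)%N ->
  (geom_deriv N)`_j = (xpoly^`())`_j + (xpoly * geom_deriv N)`_j.
Proof.
move=> hj.
have geom : \sum_(i < N) xpoly ^+ i = 1 - xpoly ^+ N + xpoly * \sum_(i < N) xpoly ^+ i.
  have -> : 1 - xpoly ^+ N = -(xpoly ^+ N - 1) by rewrite opprB.
  by rewrite subrX1; ring.
rewrite /geom_deriv {1}geom !mulrDr mulr1 mulrN !coefD coefN coef_mul_xpolyX //.
by rewrite oppr0 addr0 mulrCA.
Qed.

(* Newton's identities: when 1 - x = (1 - a z)(1 - b z)(1 - c z), the
   coefficients of g_N are the power sums of a, b, c. *)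
Variables (a b c : R).
Hypotheses (s1E : s1 = a + b + c) (s2E : s2 = - (a * b + b * c + c * a))
  (s3E : s3 = a * b * c).

Definition power_sum (n : nat) : R := a ^+ n + b ^+ n + c ^+ n.

Lemma coef_geom_deriv j N : (j < N)%N -> (geom_deriv N)`_j = power_sum j.+1.
Proof.
elim/ltn_ind: j N => j IH N hjN.
rewrite coef_geom_deriv_rec // coef_xpolyM coef_deriv_xpoly.
case: j IH hjN => [|[|[|n]]] IH hjN /=.
- by rewrite /power_sum s1E !expr1; ring.
- rewrite subnn IH //; last exact: ltnW.
  by rewrite /power_sum s1E s2E; ring.
- have l1 : (1 < N)%N by apply: ltn_trans hjN.
  rewrite !IH //; last exact: ltn_trans l1.
  by rewrite /power_sum s1E s2E s3E; ring.
- have l1 : (n.+2 < N)%N by apply: ltn_trans hjN.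
  have l2 : (n.+1 < N)%N by apply: ltn_trans l1.
  have l3 : (n < N)%N by apply: ltn_trans l2.
  rewrite !subSS !subn0 !IH //; last by rewrite ltnS leqW // leqW.
  by rewrite /power_sum s1E s2E s3E !exprS; ring.
Qed.
End TupleExpansion.

(* The logarithmic coefficients: k [z^k] (sum_(m >= 1) x^m / m) is the k-th
   power sum.  Division by m requires characteristic zero. *)
Section LogCoefficients.
Variables (K : numFieldType) (s1 s2 s3 : K).

Lemma coef_pow_div m k : (0 < m)%N -> (0 < k)%N ->
  k%:R * (m%:R^-1 * tuple_coef s1 s2 s3 m k)
  = ((xpoly s1 s2 s3)^`() * xpoly s1 s2 s3 ^+ m.-1)`_k.-1.
Proof.
move=> hm hk; have := coef_deriv (xpoly s1 s2 s3 ^+ m) k.-1.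
rewrite deriv_exp coefMn prednK // -tuple_coefE => e.
have hm0 : (m%:R : K) != 0 by rewrite pnatr_eq0 -lt0n.
apply: (mulIf hm0); rewrite [RHS]mulr_natr e -mulr_natr.
by field.
Qed.

Lemma log_coef_power_sum (a b c : K) k :
  s1 = a + b + c -> s2 = - (a * b + b * c + c * a) -> s3 = a * b * c -> (0 < k)%N ->
  k%:R * \sum_(1 <= m < k.+1) m%:R^-1 * tuple_coef s1 s2 s3 m k = power_sum a b c k.
Proof.
move=> s1E s2E s3E hk; rewrite mulr_sumr.
rewrite (eq_big_nat _ _ (F2 := fun m =>
  ((xpoly s1 s2 s3)^`() * xpoly s1 s2 s3 ^+ m.-1)`_k.-1)); last first.
  by move=> m /andP[hm _]; exact: coef_pow_div hm hk.
rewrite big_add1 /= big_mkord -coef_sum -mulr_sumr.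
by rewrite -/(geom_deriv s1 s2 s3 k) (coef_geom_deriv s1E s2E s3E) ?prednK // ltn_predL.
Qed.
End LogCoefficients.

Lemma cubic_factorisation (R : comNzRingType) (a b c : R) :
  (1 - (a + b + c) *: 'X - (- (a * b + b * c + c * a)) *: 'X^2
     - (a * b * c) *: 'X^3 : {poly R})
  = (1 - a *: 'X) * (1 - b *: 'X) * (1 - c *: 'X).
Proof. by rewrite -!mul_polyC !polyCD !polyCN !polyCM; ring. Qed.

(* Consequences of the defining relations in a representation r of U_q(gl_3)
   with q^2 <> 1 (so that kappa is invertible). *)
Section Relations.
Variables (K : numClosedFieldType) (ex : K -> K) (hbar : K).
Hypotheses (ex0 : ex 0 = 1) (exD : forall a b, ex (a + b) = ex a * ex b).
Hypothesis hq2 : qq ex hbar ^+ 2 != 1.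
Variables (W : lmodType K) (r : rep ex hbar W).

Local Notation qpow := (qpow ex hbar).
Local Notation qq := (qq ex hbar).
Local Notation kappa := (kappa ex hbar).
Local Notation E1 := (E1 r). Local Notation E2 := (E2 r).
Local Notation F1 := (F1 r). Local Notation F2 := (F2 r).
Local Notation Kq := (Kq r).

Lemma qpowD a b : qpow (a + b) = qpow a * qpow b.
Proof. by rewrite /Defs.qpow mulrDr exD. Qed.

Lemma qpow0 : qpow 0 = 1.
Proof. by rewrite /Defs.qpow mulr0 ex0. Qed.

Lemma qpow_neq0 a : qpow a != 0.
Proof.
apply/negP => /eqP h; have := qpowD a (- a); rewrite subrr qpow0 h mul0r.
by move/eqP; rewrite oner_eq0.
Qed.

Lemma qpowN a : qpow (- a) = (qpow a)^-1.
Proof.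
apply: (mulfI (qpow_neq0 a)).
by rewrite -qpowD subrr qpow0 mulfV ?qpow_neq0.
Qed.

Lemma qpowB a b : qpow (a - b) = qpow a / qpow b.
Proof. by rewrite qpowD qpowN. Qed.

Lemma qpow1 : qpow 1 = qq. Proof. by []. Qed.

Lemma qpow2 : qpow 2 = qq ^+ 2.
Proof. by rewrite -[2]/(1 + 1) qpowD expr2. Qed.

Lemma qq_neq0 : qq != 0. Proof. exact: qpow_neq0. Qed.

(* kappa = (q^2 - 1) / q is invertible *)
Lemma qq2_sub1_neq0 : qq ^+ 2 - 1 != 0. Proof. by rewrite subr_eq0. Qed.

Lemma qpow_m2M x : qpow (-2 * x) = (qpow x ^+ 2)^-1.
Proof. by rewrite mulNr qpowN -[2]/(1 + 1) mulrDl mul1r qpowD expr2. Qed.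

Lemma qpow_m1M x : qpow (-1 * x) = (qpow x)^-1.
Proof. by rewrite mulN1r qpowN. Qed.

Lemma linD f : lin f -> forall u v : W, f (u + v) = f u + f v.
Proof. by move=> h u v; have := h 1 u v; rewrite !scale1r. Qed.

Lemma lin0 f : lin f -> f (0 : W) = 0.
Proof. by move=> h; apply: (addIr (f 0)); rewrite add0r -linD // addr0. Qed.

Lemma linZ f : lin f -> forall a (u : W), f (a *: u) = a *: f u.
Proof. by move=> h a u; have := h a u 0; rewrite !addr0 lin0 // addr0. Qed.

Lemma linN f : lin f -> forall u : W, f (- u) = - f u.
Proof. by move=> h u; rewrite -scaleN1r linZ // scaleN1r. Qed.

Lemma Kq_add x1 x2 x3 u v : Kq x1 x2 x3 (u + v) = Kq x1 x2 x3 u + Kq x1 x2 x3 v.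
Proof. exact: linD (lin_Kq r x1 x2 x3) u v. Qed.

Lemma Kq_scale x1 x2 x3 a u : Kq x1 x2 x3 (a *: u) = a *: Kq x1 x2 x3 u.
Proof. exact: linZ (lin_Kq r x1 x2 x3) a u. Qed.

Lemma Kq_opp x1 x2 x3 u : Kq x1 x2 x3 (- u) = - Kq x1 x2 x3 u.
Proof. exact: linN (lin_Kq r x1 x2 x3) u. Qed.

Lemma Kq_zero x1 x2 x3 : Kq x1 x2 x3 0 = 0.
Proof. exact: lin0 (lin_Kq r x1 x2 x3). Qed.

(* The relations of U_q(gl_3) oriented as rewrite rules towards the normal
   order F ... F E ... E q^X: q^X moves to the right of E_i, F_i, and E_i
   moves to the right of F_j. *)
Lemma Kq_inv x1 x2 x3 w : Kq (- x1) (- x2) (- x3) (Kq x1 x2 x3 w) = w.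
Proof. by rewrite KqD !addNr Kq0. Qed.

Lemma Kq_F1 x1 x2 x3 w : Kq x1 x2 x3 (F1 w) = qpow (x2 - x1) *: F1 (Kq x1 x2 x3 w).
Proof. by rewrite -{1}(Kq_inv x1 x2 x3 w) KqF1 opprB. Qed.

Lemma Kq_F2 x1 x2 x3 w : Kq x1 x2 x3 (F2 w) = qpow (x3 - x2) *: F2 (Kq x1 x2 x3 w).
Proof. by rewrite -{1}(Kq_inv x1 x2 x3 w) KqF2 opprB. Qed.

Lemma Kq_E1 x1 x2 x3 w : Kq x1 x2 x3 (E1 w) = qpow (x1 - x2) *: E1 (Kq x1 x2 x3 w).
Proof. by rewrite -{1}(Kq_inv x1 x2 x3 w) KqE1. Qed.

Lemma Kq_E2 x1 x2 x3 w : Kq x1 x2 x3 (E2 w) = qpow (x2 - x3) *: E2 (Kq x1 x2 x3 w).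
Proof. by rewrite -{1}(Kq_inv x1 x2 x3 w) KqE2. Qed.

Lemma E1_F1 w : E1 (F1 w) = F1 (E1 w) + kappa^-1 *: (Kq 1 (-1) 0 w - Kq (-1) 1 0 w).
Proof. by rewrite -EF11 addrC subrK. Qed.

Lemma E2_F2 w : E2 (F2 w) = F2 (E2 w) + kappa^-1 *: (Kq 0 1 (-1) w - Kq 0 (-1) 1 w).
Proof. by rewrite -EF22 addrC subrK. Qed.

Lemma E1_F2 w : E1 (F2 w) = F2 (E1 w).
Proof. by apply/eqP; rewrite -subr_eq0 EF12. Qed.

Lemma E2_F1 w : E2 (F1 w) = F1 (E2 w).
Proof. by apply/eqP; rewrite -subr_eq0 EF21. Qed.

(* the q-Serre relations, used to eliminate the words F2 F1 F1 and F2 F2 F1 *)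
Lemma serre_F2F1F1 w :
  F2 (F1 (F1 w)) = qint ex hbar 2 *: F1 (F2 (F1 w)) - F1 (F1 (F2 w)).
Proof. by have /eqP := SerreF12 r w; rewrite addrC addr_eq0 opprB => /eqP. Qed.

Lemma serre_F2F2F1 w :
  F2 (F2 (F1 w)) = qint ex hbar 2 *: F2 (F1 (F2 w)) - F1 (F2 (F2 w)).
Proof. by have /eqP := SerreF21 r w; rewrite -addrA addr_eq0 opprD opprK => /eqP. Qed.

Lemma weight_1m2 : (1 : K) + -2 = -1.
Proof. by rewrite -[2]/(1 + 1) opprD addrA subrr add0r. Qed.
Lemma weight_m1m1 : (-1 : K) + -1 = -2. Proof. by rewrite -opprD. Qed.
Lemma weight_m1m2 : (-1 : K) + -2 = -3. Proof. by rewrite -opprD. Qed.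

Ltac normal_order := repeat progress rewrite
  ?(linD (lin_E1 r)) ?(linZ (lin_E1 r)) ?(linN (lin_E1 r)) ?(lin0 (lin_E1 r))
  ?(linD (lin_E2 r)) ?(linZ (lin_E2 r)) ?(linN (lin_E2 r)) ?(lin0 (lin_E2 r))
  ?(linD (lin_F1 r)) ?(linZ (lin_F1 r)) ?(linN (lin_F1 r)) ?(lin0 (lin_F1 r))
  ?(linD (lin_F2 r)) ?(linZ (lin_F2 r)) ?(linN (lin_F2 r)) ?(lin0 (lin_F2 r))
  ?Kq_add ?Kq_scale ?Kq_opp ?Kq_zero ?Kq_F1 ?Kq_F2 ?Kq_E1 ?Kq_E2 ?KqD
  ?E1_F1 ?E2_F2 ?E1_F2 ?E2_F1 ?serre_F2F1F1 ?serre_F2F2F1.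
Ltac simplify_weights := rewrite ?addr0 ?add0r ?subrr ?addrN ?weight_1m2 ?weight_m1m1 ?weight_m1m2.
Ltac q_identity := rewrite /qint /Defs.kappa ?qpowB ?qpowN ?qpowD ?qpow2 ?qpow1 ?qpow0;
  rewrite ?(mulr0, mul0r, addr0, add0r, subr0, sub0r, oppr0, mulr1, mul1r, invr1, divr1,
            subrr, invrK);
  field; try (by rewrite ?qq_neq0 ?qq2_sub1_neq0).

Lemma C1_F1 w : C1 r (F1 w) = F1 (C1 r w).
Proof. rewrite /C1 /E3 /F3; normal_order; simplify_weights; lincomb K W q_identity. Qed.

Lemma C1_F2 w : C1 r (F2 w) = F2 (C1 r w).
Proof. rewrite /C1 /E3 /F3; normal_order; simplify_weights; lincomb K W q_identity. Qed.

Lemma C2_F1 w : C2 r (F1 w) = F1 (C2 r w).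
Proof. rewrite /C2 /E3 /F3; normal_order; simplify_weights; lincomb K W q_identity. Qed.

Lemma C2_F2 w : C2 r (F2 w) = F2 (C2 r w).
Proof. rewrite /C2 /E3 /F3; normal_order; simplify_weights; lincomb K W q_identity. Qed.

Lemma C3_F1 w : C3 r (F1 w) = F1 (C3 r w).
Proof. rewrite /C3; normal_order; simplify_weights; lincomb K W q_identity. Qed.

Lemma C3_F2 w : C3 r (F2 w) = F2 (C3 r w).
Proof. rewrite /C3; normal_order; simplify_weights; lincomb K W q_identity. Qed.

Lemma C1_lin : lin (C1 r).
Proof. move=> a u v; rewrite /C1 /E3 /F3; normal_order; lincomb K W q_identity. Qed.

Lemma C2_lin : lin (C2 r).
Proof. move=> a u v; rewrite /C2 /E3 /F3; normal_order; lincomb K W q_identity. Qed.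

Lemma C3_lin : lin (C3 r).
Proof. move=> a u v; rewrite /C3; normal_order; lincomb K W q_identity. Qed.

Section HighestWeight.
Variables (v0 : W) (l1 l2 l3 : K).
Hypothesis hgen : forall w, gen r v0 w.
Hypotheses (hK1 : forall nu, Kq nu 0 0 v0 = qpow (nu * l1) *: v0)
  (hK2 : forall nu, Kq 0 nu 0 v0 = qpow (nu * l2) *: v0)
  (hK3 : forall nu, Kq 0 0 nu v0 = qpow (nu * l3) *: v0)
  (hE1 : E1 v0 = 0) (hE2 : E2 v0 = 0).

Local Notation a := (qpow (-2 * (l1 + 1))).
Local Notation b := (qpow (-2 * l2)).
Local Notation c := (qpow (-2 * (l3 - 1))).

Lemma Kq_v0 x1 x2 x3 :
  Kq x1 x2 x3 v0 = (qpow (x1 * l1) * qpow (x2 * l2) * qpow (x3 * l3)) *: v0.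
Proof.
have -> : Kq x1 x2 x3 v0 = Kq x1 0 0 (Kq 0 x2 0 (Kq 0 0 x3 v0)).
  by rewrite !KqD !addr0 !add0r.
by rewrite hK3 !Kq_scale hK2 !Kq_scale hK1 !scalerA; congr (_ *: _); ring.
Qed.

(* The span of the vectors F_(i_1) ... F_(i_m) v0; it is stable under q^X and
   E1, E2 (by the weight relations and [E_i, F_j]), hence it is all of W. *)
Inductive Fspan : W -> Prop :=
| Fspan_v0 : Fspan v0
| Fspan_F1 u : Fspan u -> Fspan (F1 u)
| Fspan_F2 u : Fspan u -> Fspan (F2 u)
| Fspan_lin x u v : Fspan u -> Fspan v -> Fspan (x *: u + v).

Lemma Fspan0 : Fspan 0.
Proof. by have := Fspan_lin (-1) Fspan_v0 Fspan_v0; rewrite scaleN1r addNr. Qed.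

Lemma Fspan_scale x u : Fspan u -> Fspan (x *: u).
Proof. by move=> h; have := Fspan_lin x h Fspan0; rewrite addr0. Qed.

Lemma Fspan_add u v : Fspan u -> Fspan v -> Fspan (u + v).
Proof. by move=> hu hv; have := Fspan_lin 1 hu hv; rewrite scale1r. Qed.

Lemma Fspan_sub u v : Fspan u -> Fspan v -> Fspan (u - v).
Proof. by move=> hu hv; rewrite -scaleN1r; apply/Fspan_add/Fspan_scale. Qed.

Lemma Fspan_Kq x1 x2 x3 u : Fspan u -> Fspan (Kq x1 x2 x3 u).
Proof.
elim=> [|{}u _ IH|{}u _ IH|x {}u v _ IHu _ IHv].
- by rewrite Kq_v0; apply/Fspan_scale/Fspan_v0.
- by rewrite Kq_F1; apply/Fspan_scale/Fspan_F1.
- by rewrite Kq_F2; apply/Fspan_scale/Fspan_F2.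
- by rewrite Kq_add Kq_scale; apply: Fspan_lin.
Qed.

Lemma Fspan_E1 u : Fspan u -> Fspan (E1 u).
Proof.
elim=> [|{}u hu IH|{}u _ IH|x {}u v _ IHu _ IHv].
- by rewrite hE1; apply: Fspan0.
- rewrite E1_F1; apply: Fspan_add; first exact: Fspan_F1.
  by apply/Fspan_scale/Fspan_sub; apply: Fspan_Kq.
- by rewrite E1_F2; apply: Fspan_F2.
- by rewrite (lin_E1 r); apply: Fspan_lin.
Qed.

Lemma Fspan_E2 u : Fspan u -> Fspan (E2 u).
Proof.
elim=> [|{}u _ IH|{}u hu IH|x {}u v _ IHu _ IHv].
- by rewrite hE2; apply: Fspan0.
- by rewrite E2_F1; apply: Fspan_F1.
- rewrite E2_F2; apply: Fspan_add; first exact: Fspan_F2.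
  by apply/Fspan_scale/Fspan_sub; apply: Fspan_Kq.
- by rewrite (lin_E2 r); apply: Fspan_lin.
Qed.

Lemma Fspan_all w : Fspan w.
Proof.
elim: (hgen w) => {w} [|u _ IH|u _ IH|u _ IH|u _ IH|x1 x2 x3 u _ IH|x u v _ IHu _ IHv].
- exact: Fspan_v0.
- exact: Fspan_E1.
- exact: Fspan_E2.
- exact: Fspan_F1.
- exact: Fspan_F2.
- exact: Fspan_Kq.
- exact: Fspan_lin.
Qed.

Lemma commuting_scalar (f : W -> W) (x : K) : lin f -> f v0 = x *: v0 ->
  (forall u, f (F1 u) = F1 (f u)) -> (forall u, f (F2 u) = F2 (f u)) ->
  forall w, f w = x *: w.
Proof.
move=> f_lin fv0 fF1 fF2 w; elim: (Fspan_all w) => [|u _ IH|u _ IH|y u v _ IHu _ IHv].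
- exact: fv0.
- by rewrite fF1 IH (linZ (lin_F1 r)).
- by rewrite fF2 IH (linZ (lin_F2 r)).
- by rewrite f_lin IHu IHv scalerDr !scalerA mulrC.
Qed.

Ltac weight_identity :=
  rewrite ?qpow_m2M ?qpow_m1M ?mul0r ?mul1r ?qpowB ?qpowN ?qpowD ?qpow2 ?qpow1 ?qpow0;
  field; try (by rewrite ?mulf_neq0 ?expf_neq0 ?qpow_neq0 ?qq_neq0).

(* On the highest-weight vector only the diagonal terms of C1, C2, C3
   survive; they give the elementary symmetric functions of a, b, c. *)
Lemma C1_v0 : C1 r v0 = (a + b + c) *: v0.
Proof.
rewrite /C1 /E3 /F3 !Kq_v0; normal_order; rewrite ?hE1 ?hE2; normal_order.
lincomb K W weight_identity.
Qed.

Lemma C2_v0 : C2 r v0 = (- (a * b + b * c + c * a)) *: v0.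
Proof.
rewrite /C2 /E3 /F3 !Kq_v0; normal_order; rewrite ?hE1 ?hE2; normal_order.
lincomb K W weight_identity.
Qed.

Lemma C3_v0 : C3 r v0 = (a * b * c) *: v0.
Proof. by rewrite /C3 Kq_v0; lincomb K W weight_identity. Qed.

Lemma Casimir_scalars :
  [/\ forall w, C1 r w = (a + b + c) *: w,
      forall w, C2 r w = (- (a * b + b * c + c * a)) *: w
    & forall w, C3 r w = (a * b * c) *: w].
Proof.
split; apply: commuting_scalar.
- exact: C1_lin. - exact: C1_v0. - exact: C1_F1. - exact: C1_F2.
- exact: C2_lin. - exact: C2_v0. - exact: C2_F1. - exact: C2_F2.
- exact: C3_lin. - exact: C3_v0. - exact: C3_F1. - exact: C3_F2.
Qed.

Lemma Fk_power_sum k : (0 < k)%N -> forall w, Fk r k w = (a ^+ k + b ^+ k + c ^+ k) *: w.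
Proof.
move=> hk w; have [C1E C2E C3E] := Casimir_scalars.
set s1 := a + b + c; set s2 := - (a * b + b * c + c * a); set s3 := a * b * c.
have opprodE s : opprod r s w = (\prod_(i <- s) coef3 s1 s2 s3 i) *: w.
  elim: s => [|i s IH] /=; first by rewrite big_nil scale1r.
  rewrite big_cons IH /Cvec /coef3; case: ifP => _; first by rewrite C1E scalerA.
  by case: ifP => _; [rewrite C2E scalerA | rewrite C3E scalerA].
rewrite /Fk /logcoef /powcoef.
under eq_bigr => m _ do rewrite (eq_bigr _ (fun (s : m.-tuple 'I_3) _ => opprodE s))
  -scaler_suml scalerA.
by rewrite -scaler_suml scalerA (@log_coef_power_sum _ s1 s2 s3 a b c).
Qed.

End HighestWeight.
End Relations.

Theorem mainTheorem3 (K : numClosedFieldType) (ex : K -> K) (hbar : K)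
  (ex0 : ex 0 = 1) (exD : forall a b, ex (a + b) = ex a * ex b)
  (hq2 : qq ex hbar ^+ 2 != 1)
  (W : lmodType K) (r : rep ex hbar W) (v0 : W) (l1 l2 l3 : K)
  (hgen : forall w, gen r v0 w)
  (hK1 : forall nu, Kq r nu 0 0 v0 = qpow ex hbar (nu * l1) *: v0)
  (hK2 : forall nu, Kq r 0 nu 0 v0 = qpow ex hbar (nu * l2) *: v0)
  (hK3 : forall nu, Kq r 0 0 nu v0 = qpow ex hbar (nu * l3) *: v0)
  (hE1 : E1 r v0 = 0) (hE2 : E2 r v0 = 0) :
  let a := qpow ex hbar (-2 * (l1 + 1)) in
  let b := qpow ex hbar (-2 * l2) in
  let c := qpow ex hbar (-2 * (l3 - 1)) in
  let d := fun k : nat => qq ex hbar ^+ (2 * k) + 1 + qq ex hbar ^- (2 * k) in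
  (exists c1 c2 c3 : K,
     (forall w, C1 r w = c1 *: w) /\ (forall w, C2 r w = c2 *: w) /\
     (forall w, C3 r w = c3 *: w) /\
     (1 - c1 *: 'X - c2 *: 'X^2 - c3 *: 'X^3 : {poly K})
       = (1 - a *: 'X) * (1 - b *: 'X) * (1 - c *: 'X)) /\
  (forall k : nat, (0 < k)%N -> forall w,
     Fk r k w = (a ^+ k + b ^+ k + c ^+ k) *: w) /\
  ((forall k : nat, (0 < k)%N -> d k != 0) ->
   forall k : nat, (0 < k)%N -> forall w,
     (k%:R * d k)^-1 *: Fk r k w
       = (a ^+ k / (k%:R * d k) + b ^+ k / (k%:R * d k) + c ^+ k / (k%:R * d k)) *: w).
Proof.
move=> a b c d.
have [C1E C2E C3E] := Casimir_scalars ex0 exD hq2 hgen hK1 hK2 hK3 hE1 hE2.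
have FkE := Fk_power_sum ex0 exD hq2 hgen hK1 hK2 hK3 hE1 hE2.
split; first by do 3!eexists; do !split; [exact: C1E | exact: C2E | exact: C3E |
                                         exact: cubic_factorisation].
split=> // _ k hk w.
by rewrite FkE // scalerA; congr (_ *: _); ring.
Qed.
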